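(* Let $\mathcal F$ be a nice family of graphs, let $G$ be a graph containing no member of $\mathcal F$ as a subgraph, and let $u,v$ be non-adjacent vertices of $G$. Let $G'$ be obtained from $G$ by symmetrizing $u$ to $v$. Then $G'$ contains no member of $\mathcal F$ as a subgraph.
   Context: Symmetrizing a vertex $u$ to a vertex $v$ in a graph means deleting all edges incident to $u$ and then adding all edges $uw$ where $w$ is a neighbor of $v$ (so the new neighborhood of $u$ equals that of $v$). A (finite or infinite) sequence of graphs $F_1,F_2,\dots$ is nice if for every $i$ and every two non-adjacent vertices $u,v$ of $F_i$, the graph obtained from $F_i$ by joining both $u$ and $v$ to every vertex of $N(u)\cup N(v)$ contains some $F_j$ with $j<i$ as a subgraph. A family $\mathcal F$ of graphs is nice if its elements can be ordered to form a nice sequence. *)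

From mathcomp Require Import all_boot.
Set Implicit Arguments. Unset Strict Implicit. Unset Printing Implicit Defensive.

Record sgraph := SGraph {
  sg_V :> finType;
  sg_adj : rel sg_V;
  sg_sym : symmetric sg_adj;
  sg_irr : irreflexive sg_adj }.

Definition contains (H : sgraph) (T : finType) (e : rel T) : Prop :=
  exists f : sg_V H -> T, injective f /\
    forall x y, sg_adj x y -> e (f x) (f y).

Definition join_nbhd (T : finType) (e : rel T) (u v : T) : rel T :=
  fun x y =>
    [|| e x y,
        ((x == u) || (x == v)) && (e u y || e v y)
      | ((y == u) || (y == v)) && (e u x || e v x)].

(* Symmetrize u to v: delete all edges at u, then add uw for all w in N(v). *)
Definition symmetrize (T : finType) (e : rel T) (u v : T) : rel T :=
  fun x y =>
    if x == u then e v y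
    else if y == u then e v x
    else e x y.

(* Index range of a finite (Some n: indices 0..n-1) or infinite (None) sequence. *)
Definition in_range (N : option nat) (i : nat) : Prop :=
  match N with None => True | Some n => i < n end.

Definition nice_seq (N : option nat) (s : nat -> sgraph) : Prop :=
  forall i, in_range N i ->
    forall u v : sg_V (s i), u != v -> ~~ sg_adj u v ->
      exists j, j < i /\ contains (s j) (join_nbhd (@sg_adj (s i)) u v).

Definition nice_family (F : sgraph -> Prop) : Prop :=
  exists (N : option nat) (s : nat -> sgraph),
    nice_seq N s /\
    (forall i j, in_range N i -> in_range N j -> s i = s j -> i = j) /\
    (forall H, F H <-> exists i, in_range N i /\ s i = H).

From mathcomp Require Import all_boot.

Set Implicit Arguments. Unset Strict Implicit. Unset Printing Implicit Defensive.

(* Write G' for G with u symmetrized to v, and let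
   redirect : T -> T send u to v and fix every other vertex.
   - redirect is a graph homomorphism G' -> G (edges at u in G' are edges
     at v in G), and u, v are twins in G' (they have the same neighbourhood).
   - Take an embedding f : H -> G'.  If u and v are not both images of
     distinct vertices of H, then redirect \o f is still injective, so H
     embeds into G.  Otherwise u = f a and v = f b with a, b distinct and
     non-adjacent (u, v are non-adjacent in G'), and since u, v are twins,
     f is also an embedding of the graph obtained from H by joining a and b
     to N(a) \cup N(b); every graph contained in the latter embeds into G'.
   - The theorem follows by strong induction along a nice ordering
     s_0, s_1, ... of the family: an embedding of s_i into G' yields either
     an embedding of s_i into G or, by niceness, one of some s_j, j < i,
     into G'. *)

Lemma contains_hom (H : sgraph) (T1 T2 : finType) (e1 : rel T1) (e2 : rel T2)
    (g : T1 -> T2) :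
  injective g -> (forall x y, e1 x y -> e2 (g x) (g y)) ->
  contains H e1 -> contains H e2.
Proof.
move=> ginj ghom [f [finj fhom]]; exists (g \o f); split.
- by move=> x y /ginj /finj.
- by move=> x y /fhom /ghom.
Qed.

Lemma join_nbhd_twins (S T : finType) (a : rel S) (r : rel T) (f : S -> T)
    (a0 b0 : S) :
  symmetric r -> (forall x y, a x y -> r (f x) (f y)) ->
  r (f a0) =1 r (f b0) ->
  forall x y, join_nbhd a a0 b0 x y -> r (f x) (f y).
Proof.
move=> rsym fhom twins.
have at_pair z w : (z == a0) || (z == b0) -> a a0 w || a b0 w -> r (f z) (f w).
  move=> /orP[] /eqP -> /orP[] /fhom; by rewrite ?twins // -twins.
move=> x y /or3P[/fhom // | /andP[hx hy] | /andP[hy hx]].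
- exact: at_pair.
- by rewrite rsym; apply: at_pair.
Qed.

Section Symmetrize.
Variables (T : finType) (e : rel T) (u v : T).
Hypotheses (e_sym : symmetric e) (e_irr : irreflexive e) (uv_nonadj : ~~ e u v).

Local Notation G' := (symmetrize e u v).

Lemma symmetrize_sym : symmetric G'.
Proof.
move=> x y; rewrite /symmetrize.
by case: (eqVneq x u) => [->|_]; case: (eqVneq y u) => [hy|_];
  rewrite ?hy // e_sym.
Qed.

Lemma symmetrize_nonadj : G' u v = false.
Proof. by rewrite /symmetrize eqxx e_irr. Qed.

Lemma symmetrize_twins : G' u =1 G' v.
Proof.
move=> y; rewrite /symmetrize eqxx.
case: (eqVneq v u) => [-> //|_]; case: (eqVneq y u) => [->|_] //.
by rewrite e_irr e_sym (negbTE uv_nonadj).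
Qed.

Definition redirect (x : T) : T := if x == u then v else x.

Lemma redirect_hom x y : G' x y -> e (redirect x) (redirect y).
Proof.
rewrite /symmetrize /redirect.
case: (eqVneq x u) => [_|_]; case: (eqVneq y u) => [hy|_] //.
- by rewrite hy e_sym (negbTE uv_nonadj).
- by rewrite e_sym.
Qed.

Lemma redirect_inj (S : finType) (f : S -> T) :
  injective f -> (forall a b, f a = u -> f b = v -> a = b) ->
  injective (redirect \o f).
Proof.
move=> finj uv_apart x y; rewrite /= /redirect.
case: (eqVneq (f x) u) => hx; case: (eqVneq (f y) u) => hy.
- by move=> _; apply: finj; rewrite hx hy.
- by move=> /esym; apply: uv_apart hx.
- by move=> fxv; rewrite (uv_apart y x hy fxv).
- exact: finj.
Qed.

Lemma contains_symmetrize (H : sgraph) :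
  contains H G' ->
  contains H e \/
  exists a b : H, [/\ a != b, ~~ sg_adj a b &
    forall H', contains H' (join_nbhd (@sg_adj H) a b) -> contains H' G'].
Proof.
move=> [f [finj fhom]].
case: (boolP [exists a, exists b, [&& f a == u, f b == v & a != b]]); last first.
  move=> /existsPn uv_apart; left; exists (redirect \o f); split.
  - apply: redirect_inj => // a b /eqP fa /eqP fb.
    by apply/eqP; move/existsPn/(_ b): (uv_apart a); rewrite fa fb /= negbK.
  - by move=> x y /fhom /redirect_hom.
move=> /existsP[a /existsP[b /and3P[/eqP fa /eqP fb nab]]]; right.
exists a, b; split=> //.
- by apply/negP => /fhom; rewrite fa fb symmetrize_nonadj.
- move=> H'; apply: contains_hom finj _ => x y.
  apply: join_nbhd_twins fhom _ x y; first exact: symmetrize_sym.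
  by rewrite fa fb; apply: symmetrize_twins.
Qed.

End Symmetrize.

Lemma in_range_lt (N : option nat) (i j : nat) :
  j < i -> in_range N i -> in_range N j.
Proof. by case: N => //= n ji; apply: ltn_trans. Qed.

Theorem proposition4p1 (F : sgraph -> Prop) (hF : nice_family F)
  (T : finType) (e : rel T) (esym : symmetric e) (eirr : irreflexive e)
  (hG : forall H, F H -> ~ contains H e)
  (u v : T) (huv : ~~ e u v) :
  forall H, F H -> ~ contains H (symmetrize e u v).
Proof.
have [N [s [snice [_ sF]]]] := hF.
suff no_s i : in_range N i -> ~ contains (s i) (symmetrize e u v).
  by move=> H /sF[i [hi <-]]; apply: no_s.
elim/ltn_ind: i => i IH hi /(contains_symmetrize esym eirr huv).
case=> [|[a [b [nab nadj join_G']]]].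
- by apply: hG; apply/sF; exists i.
- have [j [ji sj_join]] := snice i hi a b nab nadj.
  exact: (IH j ji (in_range_lt ji hi) (join_G' _ sj_join)).
Qed.
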